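(* Let $(X,\ast,u,d)$ be a finite block GL-rack, let $\Delta=\alpha_1\cdots\alpha_n$ be the disjoint cycle decomposition of its diagonal map (fixed points counted as $1$-cycles), and let $A_i=\operatorname{supp}(\alpha_i)$, so $X=\bigsqcup_{i=1}^n A_i$. Let $\widetilde X=\{a_1,\dots,a_n\}$ and $\pi\colon X\to\widetilde X$ the map with $\pi(A_i)=\{a_i\}$. Define on $\widetilde X$ $$a_i\,\tilde\ast\,a_j=\pi(A_i\ast A_j),\qquad \tilde u(a_i)=\pi(u(A_i)),\qquad \tilde d(a_i)=\pi(d(A_i)),$$ where $A_i\ast A_j=\{x\ast y:x\in A_i,y\in A_j\}$. Then these operations are well defined (each of $A_i\ast A_j$, $u(A_i)$, $d(A_i)$ is a single block $A_k$), and $(\widetilde X,\tilde\ast,\tilde u,\tilde d)$ is a GL-quandle.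
   Context: A rack is a set $X$ with a binary operation $\ast$ such that for every $y\in X$ the map $x\mapsto x\ast y$ is a bijection of $X$ and $(x\ast y)\ast z=(x\ast z)\ast(y\ast z)$ for all $x,y,z$. A GL-rack is a quadruple $(X,\ast,u,d)$ where $(X,\ast)$ is a rack and $u,d\colon X\to X$ are maps such that for all $x,y\in X$: $u(d(x\ast x))=d(u(x\ast x))=x$; $u(x\ast y)=u(x)\ast y$ and $d(x\ast y)=d(x)\ast y$; $x\ast u(y)=x\ast d(y)=x\ast y$. A GL-quandle is a GL-rack with $x\ast x=x$ for all $x$. The diagonal map is $\Delta(x)=x\ast x$; for a finite GL-rack it is a bijection and $\Delta=(u\circ d)^{-1}$. A finite GL-rack is a block GL-rack if all cycles in the disjoint cycle decomposition of $\Delta$ (including cycles of length $1$) have the same length. *)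

From mathcomp Require Import all_boot.
Set Implicit Arguments. Unset Strict Implicit. Unset Printing Implicit Defensive.

Definition is_rack (T : Type) (op : T -> T -> T) : Prop :=
  (forall y, bijective (fun x => op x y)) /\
  (forall x y z, op (op x y) z = op (op x z) (op y z)).

Definition is_GLrack (T : Type) (op : T -> T -> T) (u d : T -> T) : Prop :=
  [/\ is_rack op,
      (forall x, u (d (op x x)) = x /\ d (u (op x x)) = x),
      (forall x y, u (op x y) = op (u x) y /\ d (op x y) = op (d x) y)
    & (forall x y, op x (u y) = op x y /\ op x (d y) = op x y)].

Definition is_GLquandle (T : Type) (op : T -> T -> T) (u d : T -> T) : Prop :=
  is_GLrack op u d /\ (forall x, op x x = x).

Definition diag (T : Type) (op : T -> T -> T) : T -> T := fun x => op x x.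

Definition is_block_GLrack (X : finType) (op : X -> X -> X) (u d : X -> X) : Prop :=
  is_GLrack op u d /\ (forall x y, order (diag op) x = order (diag op) y).

Definition cycle_block (X : finType) (op : X -> X -> X) (x : X) : {set X} :=
  [set y | fconnect (diag op) x y].

Definition cycle_blocks (X : finType) (op : X -> X -> X) : {set {set X}} :=
  [set cycle_block op x | x : X].

Definition set_op (X : finType) (op : X -> X -> X) (A B : {set X}) : {set X} :=
  [set op a b | a in A, b in B].

(* The quotient carrier tilde X: the blocks themselves (a_i identified with A_i). *)
Definition quot_carrier (X : finType) (op : X -> X -> X) : Type :=
  {A : {set X} | A \in cycle_blocks op}.

From mathcomp Require Import all_boot.

(* The diagonal map Delta commutes with u and d and satisfies x * Delta y = x * y
   and Delta (x * y) = Delta x * y, so its cycles are compatible with the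
   operations: A_x * A_y = A_(x * y), u (A_x) = A_(u x) and d (A_x) = A_(d x).
   Hence x |-> A_x is a surjective homomorphism onto the quotient.  Equational
   axioms pass to surjective images, right translations of the quotient are
   surjective self-maps of a finite set and thus bijective, and x * x = Delta x
   lies in the cycle of x, which makes the quotient a quandle. *)

Set Implicit Arguments.
Unset Strict Implicit.
Unset Printing Implicit Defensive.

Lemma surjF_bij (T : finType) (f : T -> T) :
  (forall y, exists x, f x = y) -> bijective f.
Proof.
move=> f_surj.
have onto y : y \in codom f by apply/codomP; have [x <-] := f_surj y; exists x.
have fK : cancel (fun y => iinv (onto y)) f by move=> y; exact: f_iinv.
by exists (fun y => iinv (onto y)); [exact: canF_sym | exact: fK].
Qed.

Section SurjectiveImage.

Variables (T : Type) (S : finType) (opT : T -> T -> T) (opS : S -> S -> S).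
Variable pi : T -> S.
Hypothesis pi_surj : forall s, exists t, pi t = s.
Hypothesis pi_op : {morph pi : x y / opT x y >-> opS x y}.

Lemma rack_surj_image : is_rack opT -> is_rack opS.
Proof.
case=> opT_bij opT_dist; split=> [s | r s t].
  apply: surjF_bij => r.
  have [b <-] := pi_surj s; have [a <-] := pi_surj r.
  have [g _ gK] := opT_bij b.
  by exists (pi (g a)); rewrite -pi_op gK.
have [x <-] := pi_surj r; have [y <-] := pi_surj s; have [z <-] := pi_surj t.
by rewrite -!pi_op opT_dist.
Qed.

Variables (uT dT : T -> T) (uS dS : S -> S).
Hypothesis pi_u : {morph pi : x / uT x >-> uS x}.
Hypothesis pi_d : {morph pi : x / dT x >-> dS x}.

Lemma GLrack_surj_image : is_GLrack opT uT dT -> is_GLrack opS uS dS.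
Proof.
case=> rackT udT opT_ud ud_opT; split; first exact: rack_surj_image.
- move=> s; have [x <-] := pi_surj s; have [e1 e2] := udT x.
  by rewrite -!(pi_op, pi_u, pi_d) e1 e2.
- move=> r s; have [x <-] := pi_surj r; have [y <-] := pi_surj s.
  have [e1 e2] := opT_ud x y.
  by rewrite -!(pi_op, pi_u, pi_d) e1 e2.
- move=> r s; have [x <-] := pi_surj r; have [y <-] := pi_surj s.
  have [e1 e2] := ud_opT x y.
  by rewrite -!(pi_op, pi_u, pi_d) e1 e2.
Qed.

End SurjectiveImage.

Section CycleBlocks.

Variables (X : finType) (op : X -> X -> X) (u d : X -> X).
Hypothesis GL : is_GLrack op u d.

Local Notation D := (diag op).
Local Notation blk := (cycle_block op).

Lemma diag_inj : injective D.
Proof. by case: GL => _ udD _ _; apply: (can_inj (g := u \o d)) => x; case: (udD x). Qed.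

Lemma op_diagr x y : op x (D y) = op x y.
Proof.
case: GL => _ udD _ ud_op.
by rewrite -[in RHS](proj1 (udD y)) (proj1 (ud_op _ _)) (proj2 (ud_op _ _)).
Qed.

Lemma diag_opl x y : D (op x y) = op (D x) y.
Proof. by case: GL => [[_ op_dist] _ _ _]; rewrite /diag -op_dist. Qed.

Lemma u_diag : {morph u : x / D x}.
Proof.
by case: GL => _ _ op_ud ud_op x; rewrite /diag (proj1 (op_ud _ _)) (proj1 (ud_op _ _)).
Qed.

Lemma d_diag : {morph d : x / D x}.
Proof.
by case: GL => _ _ op_ud ud_op x; rewrite /diag (proj2 (op_ud _ _)) (proj2 (ud_op _ _)).
Qed.

Lemma cycle_blockP x y : reflect (exists n, y = iter n D x) (y \in blk x).
Proof.
rewrite inE; apply: (iffP idP) => [xy | [n ->]]; last exact: fconnect_iter.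
by exists (findex D x y); rewrite iter_findex.
Qed.

Lemma mem_cycle_block x : x \in blk x.
Proof. by apply/cycle_blockP; exists 0. Qed.

Lemma cycle_block_diag x : blk (D x) = blk x.
Proof. by apply/setP => y; rewrite !inE -(same_fconnect1 diag_inj). Qed.

Lemma cycle_block_op x y : set_op op (blk x) (blk y) = blk (op x y).
Proof.
have iter_opl n a b : iter n D (op a b) = op (iter n D a) b.
  by elim: n => //= n ->; rewrite diag_opl.
have iter_opr n a b : op a (iter n D b) = op a b.
  by elim: n => //= n IHn; rewrite op_diagr.
apply/setP => z; apply/imset2P/cycle_blockP => [[a b /cycle_blockP[n ->]] | [n ->]].
  by case/cycle_blockP=> m -> ->; exists n; rewrite iter_opr iter_opl.
exists (iter n D x) y; rewrite ?iter_opl ?mem_cycle_block //.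
by apply/cycle_blockP; exists n.
Qed.

Lemma imset_cycle_block (f : X -> X) x :
  {morph f : y / D y} -> f @: blk x = blk (f x).
Proof.
move=> fD; have iter_f n y : f (iter n D y) = iter n D (f y).
  by elim: n => //= n <-; rewrite fD.
apply/setP => z; apply/imsetP/cycle_blockP => [[y /cycle_blockP[n ->] ->] | [n ->]].
  by exists n; rewrite iter_f.
by exists (iter n D x); rewrite ?iter_f //; apply/cycle_blockP; exists n.
Qed.

Lemma cycle_block_in x : blk x \in cycle_blocks op.
Proof. exact: imset_f. Qed.

Lemma cycle_blocks_op A B :
  A \in cycle_blocks op -> B \in cycle_blocks op -> set_op op A B \in cycle_blocks op.
Proof.
by case/imsetP=> x _ ->; case/imsetP=> y _ ->; rewrite cycle_block_op cycle_block_in.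
Qed.

Lemma cycle_blocks_imset (f : X -> X) A :
  {morph f : y / D y} -> A \in cycle_blocks op -> f @: A \in cycle_blocks op.
Proof. by move=> fD /imsetP[x _ ->]; rewrite imset_cycle_block ?cycle_block_in. Qed.

Local Notation QBlock A_in := (exist (fun A => A \in cycle_blocks op) _ A_in).

Definition quot_proj (x : X) : quot_carrier op := QBlock (cycle_block_in x).

Definition quot_op (A B : quot_carrier op) : quot_carrier op :=
  QBlock (cycle_blocks_op (valP A) (valP B)).

Definition quot_map (f : X -> X) (fD : {morph f : y / D y}) (A : quot_carrier op) :
  quot_carrier op := QBlock (cycle_blocks_imset fD (valP A)).

Lemma quot_proj_surj A : exists x, quot_proj x = A.
Proof. by case: A => A /[dup] /imsetP[x _ ->] A_blk; exists x; apply: val_inj. Qed.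

Lemma quot_proj_op : {morph quot_proj : x y / op x y >-> quot_op x y}.
Proof. by move=> x y; apply: val_inj; rewrite /= cycle_block_op. Qed.

Lemma quot_proj_map f (fD : {morph f : y / D y}) :
  {morph quot_proj : x / f x >-> quot_map fD x}.
Proof. by move=> x; apply: val_inj; rewrite /= imset_cycle_block. Qed.

Lemma quot_proj_diag x : quot_proj (D x) = quot_proj x.
Proof. by apply: val_inj; rewrite /= cycle_block_diag. Qed.

End CycleBlocks.

Theorem theorem3p5 (X : finType) (op : X -> X -> X) (u d : X -> X) :
  is_block_GLrack op u d ->
  exists (top : quot_carrier op -> quot_carrier op -> quot_carrier op)
         (tu td : quot_carrier op -> quot_carrier op),
    [/\ (forall A B, val (top A B) = set_op op (val A) (val B)),
        (forall A, val (tu A) = u @: val A),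
        (forall A, val (td A) = d @: val A)
      & is_GLquandle top tu td].
Proof.
case=> GL _.
exists (quot_op GL), (quot_map (u_diag GL)), (quot_map (d_diag GL)).
split=> //; split.
  exact: (GLrack_surj_image (quot_proj_surj (op := op)) (quot_proj_op GL)
            (quot_proj_map _) (quot_proj_map _) GL).
move=> A; have [x <-] := quot_proj_surj A.
by rewrite -(quot_proj_op GL); exact: (quot_proj_diag GL).
Qed.
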